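(* Let $p\in\mathbb{D}\setminus\{0\}$ and let $\alpha_p(z)=\frac{p-z}{1-\overline{p}z}$. Consider $C_{\alpha_p}$ acting on $H^2(\mathbb{D})$ and its Hilbert space adjoint $C_{\alpha_p}^*$. Then: (i) for every $w=-\frac{p}{|p|}r$ with $0<r<1$, $$\frac{\|C_{\alpha_p}\kappa_w\|}{\|\kappa_w\|}\le\frac{\|C_{\alpha_p}^*\kappa_{-w}\|}{\|\kappa_{-w}\|};$$ (ii) for every $z\in\mathbb{D}$, $$\frac{\|C_{\alpha_p}^*\kappa_z\|}{\|\kappa_z\|}\le\frac{\|C_{\alpha_p}\kappa_{\alpha_p(z)}\|}{\|\kappa_{\alpha_p(z)}\|}.$$
   Context: $\mathbb{D}$ is the open unit disc; $H^2(\mathbb{D})$ is the Hardy space of holomorphic $f(z)=\sum a_nz^n$ with $\|f\|^2=\sum|a_n|^2<\infty$. For $w\in\mathbb{D}$, $\kappa_w(z)=\frac{1}{1-\overline{w}z}$ is the reproducing kernel of $H^2(\mathbb{D})$ at $w$, so $f(w)=\langle f,\kappa_w\rangle$ and $\|\kappa_w\|^2=(1-|w|^2)^{-1}$. $C_\varphi f=f\circ\varphi$. *)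

From Stdlib Require Import Reals ClassicalEpsilon.
From Coquelicot Require Import Coquelicot.
Open Scope R_scope.

(* A function f : C -> C is represented on the open unit disc by the
   Taylor coefficient sequence a:  f z = sum_n a_n z^n for |z| < 1. *)
Definition coeffs_of (f : C -> C) (a : nat -> C) : Prop :=
  forall z : C, Cmod z < 1 -> is_series (fun n => Cmult (a n) (pow_n z n)) (f z).

Definition inH2 (f : C -> C) : Prop :=
  exists a, coeffs_of f a /\ ex_series (fun n => (Cmod (a n)) ^ 2).

Definition H2coef (f : C -> C) : nat -> C :=
  epsilon (inhabits (fun _ : nat => RtoC 0)) (coeffs_of f).

Definition H2norm (f : C -> C) : R :=
  sqrt (Series (fun n => (Cmod (H2coef f n)) ^ 2)).

Definition H2inner (f g : C -> C) : C :=
  let s := fun n => Cmult (H2coef f n) (Cconj (H2coef g n)) in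
  (Series (fun n => fst (s n)), Series (fun n => snd (s n))).

Definition kernel (w : C) : C -> C :=
  fun z => Cdiv (RtoC 1) (Cminus (RtoC 1) (Cmult (Cconj w) z)).

Definition compop (phi : C -> C) (f : C -> C) : C -> C := fun z => f (phi z).

Definition alpha (p : C) (z : C) : C :=
  Cdiv (Cminus p z) (Cminus (RtoC 1) (Cmult (Cconj p) z)).

Definition is_H2_adjoint (T A : (C -> C) -> (C -> C)) : Prop :=
  forall g, inH2 g -> inH2 (A g) /\
    forall f, inH2 f -> H2inner (T f) g = H2inner f (A g).

(* Splitting off its value at 0, k_w o alpha_p is a constant plus z times a
   multiple of the kernel at alpha_p(w); its Taylor coefficients are therefore
   explicit and ||C k_w||^2 / ||k_w||^2 = (1 - |p|^2 |w|^2) / |1 - conj(p) w|^2.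
   The reproducing property gives C^* k_z = k_(alpha_p z), whence
   ||C^* k_z||^2 / ||k_z||^2 = |1 - conj(p) z|^2 / (1 - |p|^2).  With these closed
   forms, (i) reduces to r <= 1 (on that ray conj(p) w = -|p| r is real) and (ii),
   where 1 - conj(p) alpha_p(z) = (1 - |p|^2) / (1 - conj(p) z), to |alpha_p z| <= 1. *)

From Stdlib Require Import Reals Lra Psatz FunctionalExtensionality ClassicalEpsilon.
From Coquelicot Require Import Coquelicot.
Open Scope R_scope.

Lemma is_series_map {K1 K2 : AbsRing} {U : NormedModule K1} {V : NormedModule K2}
  (f : U -> V) (a : nat -> U) (l : U) :
  (forall x y, f (plus x y) = plus (f x) (f y)) ->
  (forall x y, norm (minus (f x) (f y)) <= norm (minus x y)) ->
  is_series a l -> is_series (fun n => f (a n)) (f l).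
Proof.
  intros f_add f_lip Ha.
  assert (sum_n_map : forall N, sum_n (fun n => f (a n)) N = f (sum_n a N)).
  { induction N as [|N IH]; [now rewrite !sum_O|now rewrite !sum_Sn, IH, f_add]. }
  apply (filterlim_locally_ball_norm (K := K2)); intros eps.
  generalize (proj1 (filterlim_locally_ball_norm (K := K1) _ _) Ha eps).
  apply filter_imp; intros N HN; unfold ball_norm in *.
  rewrite sum_n_map. eapply Rle_lt_trans; [apply f_lip|exact HN].
Qed.

Lemma is_series_fst (a : nat -> C) (l : C) :
  is_series a l -> is_series (fun n => fst (a n)) (fst l).
Proof.
  apply (is_series_map (U := C_NormedModule) (V := R_NormedModule)); [easy|].
  intros x y. apply (re_le_Cmod (x - y)%C).
Qed.

Lemma is_series_snd (a : nat -> C) (l : C) :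
  is_series a l -> is_series (fun n => snd (a n)) (snd l).
Proof.
  apply (is_series_map (U := C_NormedModule) (V := R_NormedModule)); [easy|].
  intros x y. change (Rabs (snd (x - y)%C) <= Cmod (x - y)%C).
  destruct (x - y)%C as [u v]; unfold Cmod; simpl.
  rewrite <- sqrt_Rsqr_abs. apply sqrt_le_1_alt. unfold Rsqr. nra.
Qed.

Lemma is_series_Cconj (a : nat -> C) (l : C) :
  is_series a l -> is_series (fun n => Cconj (a n)) (Cconj l).
Proof.
  apply (is_series_map (U := C_NormedModule) (V := C_NormedModule)).
  - intros x y. apply Cplus_conj.
  - intros x y. change (Cmod (Cconj x - Cconj y)%C <= Cmod (x - y)%C).
    rewrite <- Cminus_conj, Cmod_conj. lra.
Qed.

Lemma filterlim_Cmod_bound (u : nat -> C) (l : C) (e : nat -> R) :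
  (forall n, Cmod (u n - l)%C <= e n) -> is_lim_seq e 0 ->
  filterlim u eventually (locally l).
Proof.
  intros u_e e_0.
  apply (proj2 (filterlim_locally_ball_norm (K := C_AbsRing) (U := C_NormedModule) u l)); intros eps.
  apply is_lim_seq_spec in e_0. destruct (e_0 eps) as [N HN].
  exists N; intros n Hn. unfold ball_norm.
  eapply Rle_lt_trans; [apply u_e|].
  specialize (HN n Hn). rewrite Rminus_0_r in HN.
  eapply Rle_lt_trans; [apply Rle_abs|exact HN].
Qed.

Lemma one_sub_neq0 (q : C) : Cmod q < 1 -> (1 - q)%C <> 0%C.
Proof.
  intros Hq E.
  assert (q_1 : q = RtoC 1) by (replace q with (1 - (1 - q))%C by ring; rewrite E; ring).
  rewrite q_1, Cmod_1 in Hq. lra.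
Qed.

Lemma is_series_Cgeom (q : C) : Cmod q < 1 -> is_series (fun n => Cpow q n) (/ (1 - q))%C.
Proof.
  intros Hq. pose proof (one_sub_neq0 q Hq) as Hq1.
  assert (partial_sum : forall N, sum_n (fun n => Cpow q n) N = ((1 - Cpow q (S N)) / (1 - q))%C).
  { induction N as [|N IH].
    - rewrite sum_O. simpl. field. exact Hq1.
    - rewrite sum_Sn, IH. change ((1 - Cpow q (S N)) / (1 - q) + Cpow q (S N)
        = (1 - Cpow q (S (S N))) / (1 - q))%C. simpl. field. exact Hq1. }
  apply (filterlim_Cmod_bound _ _ (fun n => Cmod q ^ S n / Cmod (1 - q)%C)).
  - intros n. rewrite partial_sum.
    replace ((1 - Cpow q (S n)) / (1 - q) - / (1 - q))%C with (- Cpow q (S n) / (1 - q))%C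
      by (field; exact Hq1).
    rewrite Cmod_div, Cmod_opp, Cmod_pow by exact Hq1. lra.
  - apply (is_lim_seq_ext (fun n => Cmod q / Cmod (1 - q)%C * Cmod q ^ n)).
    { intros n. simpl. unfold Rdiv. ring. }
    rewrite <- (Rmult_0_r (Cmod q / Cmod (1 - q)%C)).
    apply (is_lim_seq_scal_l _ _ 0), is_lim_seq_geom.
    rewrite Rabs_pos_eq; [exact Hq|apply Cmod_ge_0].
Qed.

Lemma is_series_pow_0_coef (e : nat -> R) :
  (forall x, Rabs x < 1 -> is_series (fun n => e n * x ^ n) 0) -> forall n, e n = 0.
Proof.
  intros e_0 n.
  assert (e_radius : Rbar_lt 0 (CV_radius e)).
  { assert (e_half : ex_series (fun n => e n * (/ 2) ^ n)).
    { eexists. apply e_0. rewrite Rabs_pos_eq; lra. }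
    apply ex_series_lim_0 in e_half.
    destruct (filterlim_bounded (K := R_AbsRing) _ (ex_intro _ 0 e_half)) as [M HM].
    assert (Rbar_le (/ 2) (CV_radius e)).
    { apply (proj1 (CV_radius_bounded e)). exists M. intros k. apply HM. }
    destruct (CV_radius e); simpl in *; lra. }
  assert (Derive_n (PSeries e) n 0 = Derive_n (fun _ => 0) n 0) as PSeries_0.
  { apply Derive_n_ext_loc. exists (mkposreal 1 Rlt_0_1). intros t Ht.
    apply is_series_unique, e_0.
    change (Rabs (t - 0) < 1) in Ht. now rewrite Rminus_0_r in Ht. }
  pose proof (Derive_n_coef e n e_radius) as coef_n.
  rewrite PSeries_0 in coef_n.
  assert (Derive_n (fun _ : R => 0) n 0 = 0) as Derive_n_0
    by (destruct n; [reflexivity|exact (Derive_n_const n 0 0)]).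
  rewrite Derive_n_0 in coef_n.
  apply (Rmult_eq_reg_r (INR (Factorial.fact n))); [lra|apply INR_fact_neq_0].
Qed.

Lemma coeffs_of_unique (f : C -> C) (a b : nat -> C) :
  coeffs_of f a -> coeffs_of f b -> a = b.
Proof.
  intros Ha Hb. apply functional_extensionality. intros n.
  assert (diff_0 : forall x, Rabs x < 1 ->
    is_series (fun n => ((a n - b n) * Cpow (RtoC x) n)%C) (RtoC 0)).
  { intros x Hx. rewrite <- Cmod_R in Hx.
    replace (RtoC 0) with (f x - f x)%C by ring.
    eapply is_series_ext; [|exact (is_series_minus _ _ _ _ (Ha _ Hx) (Hb _ Hx))].
    intros k. change ((a k * Cpow x k) + - (b k * Cpow x k)
      = (a k - b k) * Cpow x k)%C. ring. }
  assert (fst_0 : forall k, fst (a k - b k)%C = 0).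
  { apply is_series_pow_0_coef. intros x Hx. generalize (is_series_fst _ _ (diff_0 x Hx)).
    apply is_series_ext. intros k. rewrite <- RtoC_pow. simpl. ring. }
  assert (snd_0 : forall k, snd (a k - b k)%C = 0).
  { apply is_series_pow_0_coef. intros x Hx. generalize (is_series_snd _ _ (diff_0 x Hx)).
    apply is_series_ext. intros k. rewrite <- RtoC_pow. simpl. ring. }
  specialize (fst_0 n); specialize (snd_0 n).
  destruct (a n) as [a1 a2], (b n) as [b1 b2]; simpl in *. f_equal; lra.
Qed.

Lemma H2coef_coeffs_of (f : C -> C) (a : nat -> C) : coeffs_of f a -> H2coef f = a.
Proof.
  intros Ha. unfold H2coef. apply (coeffs_of_unique f); [|exact Ha].
  apply epsilon_spec. exists a. exact Ha.
Qed.

Lemma H2norm_coeffs_of (f : C -> C) (a : nat -> C) (s : R) :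
  coeffs_of f a -> is_series (fun n => Cmod (a n) ^ 2) s -> H2norm f = sqrt s.
Proof.
  intros Ha Hs. unfold H2norm. rewrite (H2coef_coeffs_of f a Ha).
  now rewrite (is_series_unique _ _ Hs).
Qed.

Lemma H2inner_is_series (f g : C -> C) (l : C) :
  is_series (fun n => (H2coef f n * Cconj (H2coef g n))%C) l -> H2inner f g = l.
Proof.
  intros Hl. unfold H2inner. destruct l as [l1 l2].
  f_equal; apply is_series_unique; [exact (is_series_fst _ _ Hl)|exact (is_series_snd _ _ Hl)].
Qed.

Lemma Cmod_mul_lt_1 (a b : C) : Cmod a < 1 -> Cmod b < 1 -> Cmod (a * b)%C < 1.
Proof. intros Ha Hb. rewrite Cmod_mult. pose proof (Cmod_ge_0 a). pose proof (Cmod_ge_0 b). nra. Qed.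

Lemma one_sub_mul_neq0 (a b : C) : Cmod a < 1 -> Cmod b < 1 -> (1 - a * b)%C <> 0%C.
Proof. intros Ha Hb. now apply one_sub_neq0, Cmod_mul_lt_1. Qed.

Lemma kernel_coeffs_of (w : C) : Cmod w < 1 -> coeffs_of (kernel w) (fun n => Cpow (Cconj w) n).
Proof.
  intros Hw z Hz.
  assert (Hwz : Cmod (Cconj w * z)%C < 1) by (apply Cmod_mul_lt_1; [rewrite Cmod_conj|]; assumption).
  unfold kernel, Cdiv. rewrite Cmult_1_l.
  eapply is_series_ext; [|exact (is_series_Cgeom _ Hwz)].
  intros n. simpl. now rewrite Cpow_mult_l.
Qed.

Lemma is_series_Cmod_kernel_coef (w : C) : Cmod w < 1 ->
  is_series (fun n => Cmod (Cpow (Cconj w) n) ^ 2) (/ (1 - Cmod w ^ 2)).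
Proof.
  intros Hw. apply (is_series_ext (fun n => (Cmod w ^ 2) ^ n)).
  { intros n. rewrite Cmod_pow, Cmod_conj, <- !pow_mult, Nat.mul_comm. reflexivity. }
  apply is_series_geom. pose proof (Cmod_ge_0 w). rewrite Rabs_pos_eq; nra.
Qed.

Lemma kernel_inH2 (w : C) : Cmod w < 1 -> inH2 (kernel w).
Proof.
  intros Hw. exists (fun n => Cpow (Cconj w) n).
  split; [apply kernel_coeffs_of|eexists; apply is_series_Cmod_kernel_coef]; exact Hw.
Qed.

Lemma H2norm_kernel (w : C) : Cmod w < 1 -> H2norm (kernel w) = sqrt (/ (1 - Cmod w ^ 2)).
Proof.
  intros Hw. exact (H2norm_coeffs_of _ _ _ (kernel_coeffs_of w Hw) (is_series_Cmod_kernel_coef w Hw)).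
Qed.

Lemma Cconj_kernel (u v : C) : Cmod u < 1 -> Cmod v < 1 -> Cconj (kernel u v) = kernel v u.
Proof.
  intros Hu Hv. unfold kernel.
  rewrite Cdiv_conj by (apply one_sub_mul_neq0; [rewrite Cmod_conj|]; assumption).
  rewrite Cminus_conj, Cmult_conj, Cconj_conj.
  replace (Cconj 1) with (RtoC 1) by (unfold Cconj, RtoC; simpl; f_equal; ring).
  now rewrite (Cmult_comm u (Cconj v)).
Qed.

Lemma H2inner_kernel_r (f : C -> C) (a : nat -> C) (z : C) :
  coeffs_of f a -> Cmod z < 1 -> H2inner f (kernel z) = f z.
Proof.
  intros Ha Hz. apply H2inner_is_series.
  rewrite (H2coef_coeffs_of _ _ Ha), (H2coef_coeffs_of _ _ (kernel_coeffs_of z Hz)).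
  eapply is_series_ext; [|exact (Ha z Hz)].
  intros n. simpl. now rewrite Cpow_conj, Cconj_conj.
Qed.

Lemma H2inner_kernel_l (g : C -> C) (b : nat -> C) (u : C) :
  coeffs_of g b -> Cmod u < 1 -> H2inner (kernel u) g = Cconj (g u).
Proof.
  intros Hb Hu. apply H2inner_is_series.
  rewrite (H2coef_coeffs_of _ _ Hb), (H2coef_coeffs_of _ _ (kernel_coeffs_of u Hu)).
  eapply is_series_ext; [|exact (is_series_Cconj _ _ (Hb u Hu))].
  intros n. simpl. change (pow_n u n) with (Cpow u n). rewrite Cmult_conj, Cpow_conj. apply Cmult_comm.
Qed.

Lemma adjoint_kernel_eval (T A : (C -> C) -> (C -> C)) (z u : C) :
  is_H2_adjoint T A -> (exists a, coeffs_of (T (kernel u)) a) ->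
  Cmod z < 1 -> Cmod u < 1 -> A (kernel z) u = Cconj (T (kernel u) z).
Proof.
  intros TA [a Ha] Hz Hu.
  destruct (TA (kernel z) (kernel_inH2 z Hz)) as [[b [Hb _]] adjoint].
  specialize (adjoint (kernel u) (kernel_inH2 u Hu)).
  rewrite (H2inner_kernel_r _ _ _ Ha Hz), (H2inner_kernel_l _ _ _ Hb Hu) in adjoint.
  now rewrite adjoint, Cconj_conj.
Qed.

(* The reproducing property forces C_phi^* k_z = k_(phi z) on the disc. *)
Lemma H2norm_adjoint_compop_kernel (phi : C -> C) (A : (C -> C) -> (C -> C)) (z : C) :
  (forall u, Cmod u < 1 -> Cmod (phi u) < 1) ->
  (forall u, Cmod u < 1 -> exists a, coeffs_of (compop phi (kernel u)) a) ->
  is_H2_adjoint (compop phi) A -> Cmod z < 1 ->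
  H2norm (A (kernel z)) = H2norm (kernel (phi z)).
Proof.
  intros phi_disc phi_coeffs phiA Hz.
  pose proof (phi_disc z Hz) as Hphiz.
  assert (A_kernel : coeffs_of (A (kernel z)) (fun n => Cpow (Cconj (phi z)) n)).
  { intros u Hu. rewrite (adjoint_kernel_eval _ _ z u phiA (phi_coeffs u Hu) Hz Hu).
    unfold compop. rewrite Cconj_kernel by assumption.
    exact (kernel_coeffs_of _ Hphiz u Hu). }
  rewrite (H2norm_coeffs_of _ _ _ A_kernel (is_series_Cmod_kernel_coef _ Hphiz)).
  now rewrite H2norm_kernel.
Qed.

Definition shift_coef (l m : C) (a : nat -> C) (n : nat) : C :=
  match n with
  | O => l
  | S k => (m * a k)%C
  end.

Lemma coeffs_of_shift (f : C -> C) (a : nat -> C) (l m : C) :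
  coeffs_of f a -> coeffs_of (fun z => l + m * z * f z)%C (shift_coef l m a).
Proof.
  intros Ha z Hz. apply is_series_decr_1.
  eapply is_series_ext; [|refine (eq_ind _ (is_series _) (is_series_scal_l (m * z)%C _ _ (Ha z Hz)) _ _)].
  - intros n. change ((m * z) * (a n * Cpow z n) = (m * a n) * (z * Cpow z n))%C. ring.
  - change ((m * z) * f z = (l + m * z * f z) + - (l * 1))%C. ring.
Qed.

Lemma is_series_Cmod_shift_coef (a : nat -> C) (s : R) (l m : C) :
  is_series (fun n => Cmod (a n) ^ 2) s ->
  is_series (fun n => Cmod (shift_coef l m a n) ^ 2) (Cmod l ^ 2 + Cmod m ^ 2 * s).
Proof.
  intros Hs. apply is_series_decr_1.
  eapply is_series_ext; [|refine (eq_ind _ (is_series _) (is_series_scal_l (Cmod m ^ 2) _ _ Hs) _ _)].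
  - intros n. change (Cmod m ^ 2 * Cmod (a n) ^ 2 = Cmod (m * a n)%C ^ 2).
    now rewrite Cmod_mult, Rpow_mult_distr.
  - change (Cmod m ^ 2 * s = Cmod l ^ 2 + Cmod m ^ 2 * s + - Cmod l ^ 2). ring.
Qed.

Lemma Cmod_sq (z : C) : Cmod z ^ 2 = fst z ^ 2 + snd z ^ 2.
Proof. unfold Cmod. rewrite pow2_sqrt; [ring|nra]. Qed.

Lemma Cmod_one_sub_conj_mul_sq_sub (p z : C) :
  Cmod (1 - Cconj p * z)%C ^ 2 - Cmod (p - z)%C ^ 2 = (1 - Cmod p ^ 2) * (1 - Cmod z ^ 2).
Proof. rewrite !Cmod_sq. destruct p as [a b], z as [x y]. simpl. ring. Qed.

Lemma Rdiv_le_Rdiv_cross (a b c d : R) : 0 < b -> 0 < d -> a * d <= c * b -> a / b <= c / d.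
Proof.
  intros Hb Hd H. apply (Rmult_le_reg_r (b * d)); [nra|].
  replace (a / b * (b * d)) with (a * d) by (field; lra).
  replace (c / d * (b * d)) with (c * b) by (field; lra). exact H.
Qed.

Section DiscAutomorphism.

Variable p : C.
Hypothesis hp : Cmod p < 1.

Lemma one_sub_conj_mul_neq0 (z : C) : Cmod z < 1 -> (1 - Cconj p * z)%C <> 0%C.
Proof. intros Hz. apply one_sub_mul_neq0; [rewrite Cmod_conj|]; assumption. Qed.

Lemma Cmod_one_sub_conj_mul_self : Cmod (1 - Cconj p * p)%C = 1 - Cmod p ^ 2.
Proof.
  pose proof (Cmod_ge_0 p).
  replace (1 - Cconj p * p)%C with (RtoC (1 - Cmod p ^ 2)).
  - rewrite Cmod_R, Rabs_pos_eq; nra.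
  - rewrite Cmod_sq. destruct p as [a b]. unfold RtoC, Cconj, Cminus, Cmult, Cplus, Copp; simpl.
    f_equal; ring.
Qed.

Lemma one_sub_Cmod_alpha_sq (z : C) : Cmod z < 1 ->
  1 - Cmod (alpha p z) ^ 2 = (1 - Cmod p ^ 2) * (1 - Cmod z ^ 2) / Cmod (1 - Cconj p * z)%C ^ 2.
Proof.
  intros Hz. pose proof (one_sub_conj_mul_neq0 z Hz) as Hd.
  unfold alpha. rewrite Cmod_div by exact Hd.
  rewrite <- Cmod_one_sub_conj_mul_sq_sub. apply Cmod_gt_0 in Hd. field. lra.
Qed.

Lemma Cmod_alpha_lt_1 (z : C) : Cmod z < 1 -> Cmod (alpha p z) < 1.
Proof.
  intros Hz. pose proof (one_sub_Cmod_alpha_sq z Hz) as H.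
  pose proof (proj1 (Cmod_gt_0 _) (one_sub_conj_mul_neq0 z Hz)).
  pose proof (Cmod_ge_0 p); pose proof (Cmod_ge_0 z); pose proof (Cmod_ge_0 (alpha p z)).
  assert (0 < (1 - Cmod p ^ 2) * (1 - Cmod z ^ 2) / Cmod (1 - Cconj p * z)%C ^ 2).
  { apply Rdiv_lt_0_compat; [apply Rmult_lt_0_compat|]; nra. }
  nra.
Qed.

Lemma alpha_sub (w : C) : Cmod w < 1 ->
  (alpha p w - p = - w * (1 - Cconj p * p) / (1 - Cconj p * w))%C.
Proof. intros Hw. unfold alpha. field. exact (one_sub_conj_mul_neq0 w Hw). Qed.

Lemma one_sub_conj_mul_alpha (z : C) : Cmod z < 1 ->
  (1 - Cconj p * alpha p z = (1 - Cconj p * p) / (1 - Cconj p * z))%C.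
Proof. intros Hz. unfold alpha. field. exact (one_sub_conj_mul_neq0 z Hz). Qed.

(* The constant term is k_w(alpha_p 0) = k_w(p). *)
Lemma kernel_alpha (w z : C) : Cmod w < 1 -> Cmod z < 1 ->
  kernel w (alpha p z) =
  (/ (1 - Cconj w * p) + / (1 - Cconj w * p) * (Cconj (alpha p w) - Cconj p) * z
     * kernel (alpha p w) z)%C.
Proof.
  intros Hw Hz.
  pose proof (one_sub_conj_mul_neq0 z Hz) as Hpz.
  pose proof (one_sub_conj_mul_neq0 w Hw) as Hpw.
  assert (Hwp : (1 - Cconj w * p)%C <> 0%C)
    by (apply one_sub_mul_neq0; [rewrite Cmod_conj|]; assumption).
  assert (Hpw' : (1 - p * Cconj w)%C <> 0%C)
    by (apply one_sub_mul_neq0; [|rewrite Cmod_conj]; assumption).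
  assert (Hwaz : (1 - Cconj w * alpha p z)%C <> 0%C)
    by (apply one_sub_mul_neq0; [rewrite Cmod_conj|apply Cmod_alpha_lt_1]; assumption).
  assert (Hawz : (1 - Cconj (alpha p w) * z)%C <> 0%C)
    by (apply one_sub_mul_neq0; [rewrite Cmod_conj; apply Cmod_alpha_lt_1|]; assumption).
  assert (conj_alpha : Cconj (alpha p w) = ((Cconj p - Cconj w) / (1 - p * Cconj w))%C).
  { unfold alpha. rewrite Cdiv_conj by exact Hpw.
    rewrite !Cminus_conj, Cmult_conj, Cconj_conj. f_equal. f_equal.
    unfold Cconj, RtoC; simpl. f_equal; ring. }
  unfold kernel. rewrite conj_alpha in Hawz |- *. unfold alpha in *.
  assert (Hawz' : (1 - p * Cconj w - (Cconj p - Cconj w) * z)%C <> 0%C).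
  { intros E. apply Hawz.
    replace (1 - (Cconj p - Cconj w) / (1 - p * Cconj w) * z)%C
      with ((1 - p * Cconj w - (Cconj p - Cconj w) * z) / (1 - p * Cconj w))%C
      by (field; exact Hpw').
    rewrite E. unfold Cdiv. ring. }
  field. repeat split; assumption.
Qed.

Lemma compop_alpha_kernel_coeffs_of (w : C) : Cmod w < 1 ->
  coeffs_of (compop (alpha p) (kernel w))
    (shift_coef (/ (1 - Cconj w * p))%C (/ (1 - Cconj w * p) * (Cconj (alpha p w) - Cconj p))%C
       (fun n => Cpow (Cconj (alpha p w)) n)).
Proof.
  intros Hw z Hz. unfold compop. rewrite kernel_alpha by assumption.
  exact (coeffs_of_shift _ _ _ _ (kernel_coeffs_of _ (Cmod_alpha_lt_1 w Hw)) z Hz).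
Qed.

Lemma H2norm_compop_alpha_kernel (w : C) : Cmod w < 1 ->
  H2norm (compop (alpha p) (kernel w)) =
  sqrt ((1 - Cmod w ^ 2 * Cmod p ^ 2) / (Cmod (1 - Cconj p * w)%C ^ 2 * (1 - Cmod w ^ 2))).
Proof.
  intros Hw.
  rewrite (H2norm_coeffs_of _ _ _ (compop_alpha_kernel_coeffs_of w Hw)
    (is_series_Cmod_shift_coef _ _ _ _ (is_series_Cmod_kernel_coef _ (Cmod_alpha_lt_1 w Hw)))).
  f_equal.
  pose proof (one_sub_conj_mul_neq0 w Hw) as Hpw.
  assert (Cmod_lambda : Cmod (/ (1 - Cconj w * p))%C = / Cmod (1 - Cconj p * w)%C).
  { rewrite Cmod_inv.
    - f_equal. rewrite <- Cmod_conj. f_equal.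
      destruct p as [a b], w as [x y]. unfold Cconj, Cminus, Cmult, Cplus, Copp, RtoC; simpl.
      f_equal; ring.
    - apply one_sub_mul_neq0; [rewrite Cmod_conj|]; assumption. }
  assert (Cmod_alpha_sub : Cmod (Cconj (alpha p w) - Cconj p)%C
                           = Cmod w * (1 - Cmod p ^ 2) / Cmod (1 - Cconj p * w)%C).
  { rewrite <- Cminus_conj, Cmod_conj, alpha_sub, Cmod_div, !Cmod_mult, Cmod_opp by assumption.
    now rewrite Cmod_one_sub_conj_mul_self. }
  rewrite Cmod_mult, Rpow_mult_distr, Cmod_lambda, Cmod_alpha_sub, one_sub_Cmod_alpha_sq by assumption.
  apply Cmod_gt_0 in Hpw.
  pose proof (Cmod_ge_0 p); pose proof (Cmod_ge_0 w).
  field. repeat split; nra.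
Qed.

Lemma compop_alpha_kernel_ratio (w : C) : Cmod w < 1 ->
  H2norm (compop (alpha p) (kernel w)) / H2norm (kernel w) =
  sqrt ((1 - Cmod w ^ 2 * Cmod p ^ 2) / Cmod (1 - Cconj p * w)%C ^ 2).
Proof.
  intros Hw. pose proof (proj1 (Cmod_gt_0 _) (one_sub_conj_mul_neq0 w Hw)).
  pose proof (Cmod_ge_0 w).
  rewrite H2norm_compop_alpha_kernel, H2norm_kernel, <- sqrt_div_alt by (try apply Rinv_0_lt_compat; nra).
  f_equal. field. split; nra.
Qed.

Lemma adjoint_alpha_kernel_ratio (A : (C -> C) -> (C -> C)) (z : C) :
  is_H2_adjoint (compop (alpha p)) A -> Cmod z < 1 ->
  H2norm (A (kernel z)) / H2norm (kernel z) = sqrt (Cmod (1 - Cconj p * z)%C ^ 2 / (1 - Cmod p ^ 2)).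
Proof.
  intros alphaA Hz.
  pose proof (Cmod_alpha_lt_1 z Hz) as Haz.
  rewrite (H2norm_adjoint_compop_kernel (alpha p) A z Cmod_alpha_lt_1
             (fun u Hu => ex_intro _ _ (compop_alpha_kernel_coeffs_of u Hu)) alphaA Hz).
  pose proof (proj1 (Cmod_gt_0 _) (one_sub_conj_mul_neq0 z Hz)).
  pose proof (Cmod_ge_0 p); pose proof (Cmod_ge_0 z); pose proof (Cmod_ge_0 (alpha p z)).
  rewrite !H2norm_kernel, <- sqrt_div_alt by (try apply Rinv_0_lt_compat; nra).
  f_equal. rewrite one_sub_Cmod_alpha_sq by exact Hz. field. repeat split; nra.
Qed.

Section Ray.

Hypothesis hp0 : p <> 0%C.
Variable r : R.
Hypothesis hr : 0 < r < 1.

Let v := (p / Cmod p * r)%C.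

Lemma Cmod_ray : Cmod v = r.
Proof.
  pose proof (proj1 (Cmod_gt_0 p) hp0).
  unfold v. rewrite Cmod_mult, Cmod_div by (intros E; apply RtoC_inj in E; lra).
  rewrite !Cmod_R, !Rabs_pos_eq by lra. field. lra.
Qed.

Lemma conj_mul_ray : (Cconj p * v)%C = RtoC (Cmod p * r).
Proof.
  pose proof (proj1 (Cmod_gt_0 p) hp0).
  assert (RtoC (Cmod p) <> 0%C) by (intros E; apply RtoC_inj in E; lra).
  unfold v. replace (Cconj p * (p / Cmod p * r))%C with (p * Cconj p * r / Cmod p)%C
    by (field; assumption).
  rewrite <- Cmod2_conj, <- RtoC_mult, <- RtoC_div by lra.
  f_equal. field. lra.
Qed.

Lemma compop_alpha_kernel_ratio_le_adjoint_opp (A : (C -> C) -> (C -> C)) :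
  is_H2_adjoint (compop (alpha p)) A ->
  H2norm (compop (alpha p) (kernel (- v))) / H2norm (kernel (- v))
    <= H2norm (A (kernel (- - v))) / H2norm (kernel (- - v)).
Proof.
  intros alphaA. replace (- - v)%C with v by ring.
  pose proof Cmod_ray as Cmod_v.
  pose proof (proj1 (Cmod_gt_0 p) hp0).
  assert (Cmod_one_sub : forall x : R, Cmod (1 - RtoC x)%C ^ 2 = (1 - x) ^ 2).
  { intros x. rewrite <- RtoC_minus, Cmod_R, <- Rsqr_pow2, <- Rsqr_abs. apply Rsqr_pow2. }
  rewrite (compop_alpha_kernel_ratio (- v)) by (rewrite Cmod_opp; lra).
  rewrite (adjoint_alpha_kernel_ratio A v alphaA) by lra.
  replace (Cconj p * - v)%C with (RtoC (- (Cmod p * r)))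
    by (rewrite RtoC_opp, <- conj_mul_ray; ring).
  rewrite conj_mul_ray, !Cmod_one_sub, Cmod_opp, Cmod_v.
  (* With s = |p| the comparison is (1 - s r) / (1 + s r) <= (1 - s r)^2 / (1 - s^2). *)
  assert (0 < Cmod p * r < 1) by (split; nra).
  assert (0 <= (1 - (Cmod p * r) ^ 2) * (Cmod p ^ 2 * (1 - r ^ 2))).
  { apply Rmult_le_pos; [nra|apply Rmult_le_pos; nra]. }
  apply sqrt_le_1_alt, Rdiv_le_Rdiv_cross; nra.
Qed.

End Ray.

Lemma adjoint_kernel_ratio_le_compop_alpha (A : (C -> C) -> (C -> C)) (z : C) :
  is_H2_adjoint (compop (alpha p)) A -> Cmod z < 1 ->
  H2norm (A (kernel z)) / H2norm (kernel z)
    <= H2norm (compop (alpha p) (kernel (alpha p z))) / H2norm (kernel (alpha p z)).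
Proof.
  intros alphaA Hz. pose proof (Cmod_alpha_lt_1 z Hz) as Haz.
  pose proof (one_sub_conj_mul_neq0 z Hz) as Hpz.
  rewrite (adjoint_alpha_kernel_ratio A z alphaA Hz), (compop_alpha_kernel_ratio _ Haz),
    (one_sub_conj_mul_alpha z Hz), Cmod_div, Cmod_one_sub_conj_mul_self by exact Hpz.
  apply Cmod_gt_0 in Hpz. pose proof (Cmod_ge_0 p); pose proof (Cmod_ge_0 (alpha p z)).
  apply sqrt_le_1_alt, Rdiv_le_Rdiv_cross; [nra|apply pow_lt, Rdiv_lt_0_compat; nra|].
  replace (Cmod (1 - Cconj p * z)%C ^ 2 * ((1 - Cmod p ^ 2) / Cmod (1 - Cconj p * z)%C) ^ 2)
    with ((1 - Cmod p ^ 2) ^ 2) by (field; lra).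
  (* The comparison is 1 - |p|^2 <= 1 - |p|^2 |alpha_p z|^2. *)
  assert (0 <= (1 - Cmod p ^ 2) * (Cmod p ^ 2 * (1 - Cmod (alpha p z) ^ 2))).
  { apply Rmult_le_pos; [nra|apply Rmult_le_pos; nra]. }
  nra.
Qed.

End DiscAutomorphism.

Theorem proposition2p3 (p : C) (hp0 : p <> RtoC 0) (hp : Cmod p < 1)
  (Cstar : (C -> C) -> (C -> C))
  (hCstar : is_H2_adjoint (compop (alpha p)) Cstar) :
  (forall r : R, 0 < r < 1 ->
     let w := Copp (Cmult (Cdiv p (RtoC (Cmod p))) (RtoC r)) in
     H2norm (compop (alpha p) (kernel w)) / H2norm (kernel w)
       <= H2norm (Cstar (kernel (Copp w))) / H2norm (kernel (Copp w))) /\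
  (forall z : C, Cmod z < 1 ->
     H2norm (Cstar (kernel z)) / H2norm (kernel z)
       <= H2norm (compop (alpha p) (kernel (alpha p z)))
          / H2norm (kernel (alpha p z))).
Proof.
  split.
  - intros r Hr. exact (compop_alpha_kernel_ratio_le_adjoint_opp p hp hp0 r Hr Cstar hCstar).
  - intros z Hz. exact (adjoint_kernel_ratio_le_compop_alpha p hp Cstar z hCstar Hz).
Qed.
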